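(* Let $\mathfrak A$ be a finite dimensional $C^*$-algebra and $\Phi:\mathfrak A\to\mathfrak A$ a (not necessarily unital) $*$-endomorphism. Then $\sigma(\Phi)\subset\{0\}\cup\mathbb T$.
   Context: $\sigma(\Phi)$ is the spectrum (set of eigenvalues) of the linear map $\Phi$ on $\mathfrak A$; $\mathbb T=\{\lambda\in\mathbb C:|\lambda|=1\}$. *)

From HB Require Import structures.
From mathcomp Require Import all_boot all_order all_algebra.
Set Implicit Arguments. Unset Strict Implicit. Unset Printing Implicit Defensive.
Import Order.TTheory GRing.Theory Num.Theory.
Local Open Scope ring_scope.

(* Scalars: an arbitrary numeric algebraically closed field C with conjugation
   (e.g. the complex numbers). A finite-dimensional C*-algebra is represented
   concretely as a *-subalgebra of 'M[C]_n (every finite-dimensional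
   C*-algebra is *-isomorphic to one, and conversely). *)

Definition adjmx (C : numClosedFieldType) (n : nat) (a : 'M[C]_n) : 'M[C]_n :=
  (map_mx Num.conj a)^T.

Definition is_star_subalg (C : numClosedFieldType) (n : nat)
    (A : 'M[C]_n -> Prop) : Prop :=
  [/\ A 0,
      (forall a b, A a -> A b -> A (a + b)),
      (forall (c : C) a, A a -> A (c *: a)),
      (forall a b, A a -> A b -> A (a *m b))
    & (forall a, A a -> A (adjmx a))].

Definition is_star_endo (C : numClosedFieldType) (n : nat)
    (A : 'M[C]_n -> Prop) (Phi : 'M[C]_n -> 'M[C]_n) : Prop :=
  [/\ (forall a, A a -> A (Phi a)),
      (forall a b, A a -> A b -> Phi (a + b) = Phi a + Phi b),
      (forall (c : C) a, A a -> Phi (c *: a) = c *: Phi a),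
      (forall a b, A a -> A b -> Phi (a *m b) = Phi a *m Phi b)
    & (forall a, A a -> Phi (adjmx a) = adjmx (Phi a))].

Definition spectrum (C : numClosedFieldType) (n : nat)
    (A : 'M[C]_n -> Prop) (Phi : 'M[C]_n -> 'M[C]_n) (l : C) : Prop :=
  exists a, [/\ A a, a != 0 & Phi a = l *: a].

From HB Require Import structures.
From mathcomp Require Import all_boot all_order all_algebra.
Set Implicit Arguments. Unset Strict Implicit. Unset Printing Implicit Defensive.
Import Order.TTheory GRing.Theory Num.Theory.
Local Open Scope ring_scope.

(* Let [Phi a = l a] with [a != 0] and [l != 0]. Then [b := a^* a] is a
   nonzero hermitian element with [Phi b = c b], [c := |l|^2 > 0], so
   [Phi (r b) = r (c b)] for every polynomial [r] without constant term.
   Applied to [r := X chi_b], where [chi_b] is the characteristic polynomial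
   of [b], this shows that the nonzero roots of [chi_b] are stable under
   multiplication by [c].  A hermitian [b != 0] is not nilpotent, so [chi_b]
   has a nonzero root, and finiteness of its orbit forces [c] to be a root
   of unity; being positive, [c = 1]. *)

Section Adjoint.
Variables (C : numClosedFieldType) (n : nat).
Implicit Types x y : 'M[C]_n.

Lemma adjmxM x y : adjmx (x *m y) = adjmx y *m adjmx x.
Proof.
apply/matrixP => i j; rewrite !mxE rmorph_sum; apply: eq_bigr => k _.
by rewrite !mxE rmorphM mulrC.
Qed.

Lemma adjmxZ (c : C) x : adjmx (c *: x) = c^* *: adjmx x.
Proof. by apply/matrixP => i j; rewrite !mxE rmorphM. Qed.

Lemma adjmxK x : adjmx (adjmx x) = x.
Proof. by apply/matrixP => i j; rewrite !mxE conjCK. Qed.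

Lemma adjmx1 : adjmx 1%:M = 1%:M :> 'M[C]_n.
Proof. by apply/matrixP => i j; rewrite !mxE eq_sym rmorph_nat. Qed.

(* The diagonal entries of [x^* x] are the squared norms of the columns of [x]. *)
Lemma adjmx_mul_self_eq0 x : adjmx x *m x = 0 -> x = 0.
Proof.
move=> xx0; apply/matrixP => i j; rewrite mxE.
have /eqP : \sum_k `|x k j| ^+ 2 = 0.
  have := congr1 (fun y : 'M[C]_n => y j j) xx0; rewrite !mxE => xxjj; rewrite -[RHS]xxjj.
  by apply: eq_bigr => k _; rewrite !mxE normCKC.
rewrite psumr_eq0 => [/allP/(_ i (mem_index_enum i))|k _]; last exact: exprn_ge0.
by rewrite sqrf_eq0 normr_eq0 => /eqP.
Qed.

End Adjoint.

Section Hermitian.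
Variables (C : numClosedFieldType) (n' : nat).
Local Notation n := n'.+1.
Implicit Types x : 'M[C]_n.

Lemma adjmxX x k : adjmx (x ^+ k) = adjmx x ^+ k.
Proof.
elim: k => [|k IHk]; first exact: adjmx1.
by rewrite exprSr -mulmxE adjmxM IHk mulmxE -exprS.
Qed.

Lemma hermitian_nilpotent_eq0 x m : adjmx x = x -> x ^+ m = 0 -> x = 0.
Proof.
move=> xh xm0.
suff x2k0 k : x ^+ (2 ^ k) = 0 -> x = 0.
  by apply: (x2k0 m); rewrite -(subnKC (ltnW (ltn_expl m (ltnSn 1)))) exprD xm0 mul0r.
elim: k => [|k IHk]; first by rewrite expr1.
move=> x2k0; apply: IHk; apply: adjmx_mul_self_eq0.
by rewrite adjmxX xh mulmxE -exprD addnn -mul2n -expnS.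
Qed.

End Hermitian.

Lemma eigenvalueZ (F : fieldType) (n : nat) (M : 'M[F]_n) (c a : F) :
  eigenvalue M a -> eigenvalue (c *: M) (c * a).
Proof.
move=> /eigenvalueP [v vM v0]; apply/eigenvalueP; exists v => //.
by rewrite -scalemxAr vM scalerA mulrC.
Qed.

Lemma eigenvalue_annihilator_root (F : fieldType) (n' : nat) (M : 'M[F]_n'.+1)
    (p : {poly F}) (a : F) :
  horner_mx M p = 0 -> eigenvalue M a -> root p a.
Proof. by move=> /mxminpoly_min Mp; rewrite eigenvalue_root_min; apply: root_dvdp. Qed.

Lemma char_poly_nonzero_root (F : closedFieldType) (n' : nat) (M : 'M[F]_n'.+1) :
  (forall m, M ^+ m != 0) -> exists2 z, z != 0 & root (char_poly M) z.
Proof.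
move=> Mpow_neq0; have chi_neq0 : char_poly M != 0 by rewrite monic_neq0 ?char_poly_monic.
have [m [q]] := multiplicity_XsubC (char_poly M) 0.
rewrite chi_neq0 subr0 /= => q0 chiE.
have [/eqP/size_poly1P [u u0 qu] | /closed_rootP [z qz]] := eqVneq (size q) 1%N.
  have := Cayley_Hamilton M; rewrite chiE qu rmorphM rmorphXn /= horner_mx_C horner_mx_X.
  rewrite -mulmxE mul_scalar_mx => /eqP.
  by rewrite scaler_eq0 (negbTE u0) (negbTE (Mpow_neq0 m)).
exists z; first by apply: contraNneq q0 => <-.
by rewrite chiE rootM qz.
Qed.

(* Pigeonhole on the orbit [c^i z], [i < size p], inside the finite root set of [p]. *)
Lemma root_mul_stable_unity (R : idomainType) (p : {poly R}) (c z : R) :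
  p != 0 -> c != 0 -> z != 0 -> root p z ->
  (forall y, y != 0 -> root p y -> root p (c * y)) ->
  exists2 k, (0 < k)%N & c ^+ k = 1.
Proof.
move=> p0 c0 z0 pz pstable.
have orbit_root i : root p (c ^+ i * z).
  elim: i => [|i IHi]; first by rewrite mul1r.
  by rewrite exprS -mulrA pstable // mulf_neq0 // expf_neq0.
set orbit := [seq c ^+ i * z | i <- iota 0 (size p)].
have orbit_roots : all (root p) orbit by apply/allP => _ /mapP [i _ ->].
have : ~~ uniq orbit.
  by apply/negP => /(max_poly_roots p0 orbit_roots); rewrite size_map size_iota ltnn.
case/(uniqPn 0) => i [j [ij]]; rewrite size_map size_iota => jp.
rewrite !(nth_map 0%N) ?size_iota ?(ltn_trans ij) // !nth_iota ?(ltn_trans ij) //.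
rewrite !add0n => /(mulIf z0); rewrite -(subnKC (ltnW ij)) exprD -[LHS]mulr1.
by move=> /(mulfI (expf_neq0 i c0)) /esym cji; exists (j - i)%N; rewrite ?subn_gt0.
Qed.

Section StarEndomorphism.
Variables (C : numClosedFieldType) (n' : nat).
Local Notation n := n'.+1.
Variables (A : 'M[C]_n -> Prop) (Phi : 'M[C]_n -> 'M[C]_n).
Hypotheses (A_star : is_star_subalg A) (Phi_star : is_star_endo A Phi).

Lemma star_endo0 : Phi 0 = 0.
Proof.
move: (A_star) => [A0 _ _ _ _]; move: (Phi_star) => [_ _ PhiZ _ _].
by have := PhiZ 0 0 A0; rewrite !scale0r.
Qed.

Lemma star_endo_hornerX b : A b -> forall r : {poly C},
  A (horner_mx b ('X * r)) /\ Phi (horner_mx b ('X * r)) = horner_mx (Phi b) ('X * r).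
Proof.
move: (A_star) => [A0 AD AZ AM _]; move: (Phi_star) => [_ PhiD PhiZ PhiM _].
move=> Ab; elim/poly_ind => [|r k [Ar Phir]].
  by rewrite mulr0 !rmorph0 star_endo0.
rewrite mulrDr mulrA [('X * k%:P)]mulrC mul_polyC !rmorphD /=.
rewrite (rmorphM (horner_mx b)) (rmorphM (horner_mx (Phi b))) /=.
rewrite !horner_mxZ !horner_mx_X -!mulmxE.
have [Arb Akb] := (AM _ _ Ar Ab, AZ k _ Ab).
by split; [apply: AD | rewrite PhiD // PhiM // PhiZ // Phir].
Qed.

Lemma star_endo_adjmx_mul_eigen a (l : C) : A a -> Phi a = l *: a ->
  Phi (adjmx a *m a) = `|l| ^+ 2 *: (adjmx a *m a).
Proof.
move: (A_star) => [_ _ _ _ AJ]; move: (Phi_star) => [_ _ _ PhiM PhiJ].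
move=> Aa Phia; have Aadj := AJ _ Aa.
rewrite PhiM // PhiJ // Phia adjmxZ.
by rewrite -scalemxAl -scalemxAr scalerA normCKC.
Qed.

Lemma star_endo_scale_unity b (c : C) :
  A b -> adjmx b = b -> b != 0 -> c != 0 -> Phi b = c *: b ->
  exists2 k, (0 < k)%N & c ^+ k = 1.
Proof.
move=> Ab bh b0 c0 Phib.
have chi_neq0 : char_poly b != 0 by rewrite monic_neq0 ?char_poly_monic.
have cb_ann : horner_mx (c *: b) ('X * char_poly b) = 0.
  rewrite -Phib; have [_ <-] := star_endo_hornerX Ab (char_poly b).
  by rewrite rmorphM /= Cayley_Hamilton mulr0 star_endo0.
have [z z0 chiz] : exists2 z, z != 0 & root (char_poly b) z.
  apply: char_poly_nonzero_root => m.
  by apply: contraNneq b0 => /(hermitian_nilpotent_eq0 bh) ->.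
apply: (root_mul_stable_unity chi_neq0 c0 z0 chiz) => y y0.
rewrite -eigenvalue_root_char => /(eigenvalueZ c)/(eigenvalue_annihilator_root cb_ann).
by rewrite rootM rootX (negbTE (mulf_neq0 c0 y0)).
Qed.

Lemma star_endo_eigen_norm1 a (l : C) :
  A a -> a != 0 -> Phi a = l *: a -> l != 0 -> `|l| = 1.
Proof.
move: (A_star) => [_ _ _ AM AJ].
move=> Aa a0 Phia l0; set b := adjmx a *m a.
have b0 : b != 0 by apply: contra_neq a0 => /adjmx_mul_self_eq0.
have bh : adjmx b = b by rewrite adjmxM adjmxK.
have l2_0 : `|l| ^+ 2 != 0 by rewrite expf_neq0 ?normr_eq0.
have [k k0] := star_endo_scale_unity (AM _ _ (AJ _ Aa) Aa) bh b0 l2_0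
  (star_endo_adjmx_mul_eigen Aa Phia).
by rewrite -exprM => /eqP; rewrite pexpr_eq1 ?muln_gt0 // => /eqP.
Qed.

End StarEndomorphism.

Theorem proposition3p6 (C : numClosedFieldType) (n : nat)
    (A : 'M[C]_n -> Prop) (Phi : 'M[C]_n -> 'M[C]_n) :
  is_star_subalg A -> is_star_endo A Phi ->
  forall l : C, spectrum A Phi l -> l = 0 \/ `|l| = 1.
Proof.
move=> A_star Phi_star l [a [Aa a0 Phia]].
have [-> | l0] := eqVneq l 0; [by left | right].
case: n => [|n'] in A Phi a A_star Phi_star Aa a0 Phia *.
  by rewrite thinmx0 eqxx in a0.
exact: (star_endo_eigen_norm1 A_star Phi_star Aa a0 Phia l0).
Qed.
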